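(* Let $V$ be a vertex algebra, $g$ an automorphism of $V$ of finite order $T$, and $n,m\in(1/T)\mathbb{N}$. Then the quotient space $\tilde{A}_{g,n,m}(V)=V/\tilde{O}_{g,n,m}(V)$ is an $\tilde{A}_{g,n}(V)$–$\tilde{A}_{g,m}(V)$-bimodule, where the left action is well defined by $(u+\tilde{O}_{g,n}(V))\cdot(w+\tilde{O}_{g,n,m}(V))=u\,\bar{\bullet}_{g,m}^{\,n}\,w+\tilde{O}_{g,n,m}(V)$ and the right action is well defined by $(w+\tilde{O}_{g,n,m}(V))\cdot(v+\tilde{O}_{g,m}(V))=w\bullet_{g,m}^{\,n}v+\tilde{O}_{g,n,m}(V)$, for $u,v,w\in V$.
   Context: $V$ is a vertex algebra with vacuum $\mathbf{1}$, vertex operator $Y(v,x)=\sum_{k\in\mathbb Z}v_kx^{-k-1}$ and $\mathcal{D}v=v_{-2}\mathbf 1$. $g$ is an automorphism ($g\mathbf 1=\mathbf 1$, $gY(u,x)v=Y(gu,x)gv$) with $g^T=1$, and $V=\bigoplus_{r=0}^{T-1}V^r$, $V^r=\{v: gv=e^{-2\pi\sqrt{-1}r/T}v\}$. For $k,l\in\{0,\dots,T-1\}$ let $\delta_k(l)=1$ if $k\ge l$, $\delta_k(l)=0$ if $k<l$, and $\delta_k(T)=0$. Every $n\in(1/T)\mathbb Z$ is written uniquely $n=\lfloor n\rfloor+\bar n/T$ with $\bar n\in\{0,\dots,T-1\}$. Powers $(1+y)^\alpha$ are expanded as binomial series in nonnegative powers of $y$, and $Y(u,\log(1+y))v$ denotes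 $Y(u,x)v\in V((x))$ with $x=\log(1+y)=\sum_{k\ge1}(-1)^{k-1}y^k/k$ substituted. For $u\in V^r$, $v\in V$, $m,n,p\in(1/T)\mathbb N$ with $\bar p-\bar n\equiv r\pmod T$ define $u\bullet_{g,m,p}^{\,n}v=\sum_{i=0}^{\lfloor p\rfloor}(-1)^i\binom{\lfloor m\rfloor+\lfloor n\rfloor-\lfloor p\rfloor-1+\delta_{\bar m}(r)+\delta_{\bar n}(T-r)+i}{i}\operatorname{Res}_y\frac{(1+y)^{-1+\lfloor m\rfloor+\delta_{\bar m}(r)+r/T}}{y^{\lfloor m\rfloor+\lfloor n\rfloor-\lfloor p\rfloor+\delta_{\bar m}(r)+\delta_{\bar n}(T-r)+i}}Y(u,\log(1+y))v,$ and $u\bullet_{g,m,p}^{\,n}v=0$ if $\bar p-\bar n\not\equiv r\pmod T$; extend bilinearly. Put $\bar\bullet_{g,m}^{\,n}=\bullet_{g,m,n}^{\,n}$, $\bullet_{g,m}^{\,n}=\bullet_{g,m,m}^{\,n}$, $\bullet_{g,n}=\bullet_{g,n,n}^{\,n}$. For $u\in V^r,v\in V$: $u\diamond_{g,m}^{\,n}v=\operatorname{Res}_y\frac{(1+y)^{-1+\delta_{\bar m}(r)+\lfloor m\rfloor+r/T}}{y^{\lfloor m\rfloor+\lfloor n\rfloor+\delta_{\bar m}(r)+\delta_{\bar n}(T-r)+1}}Y(u,\log(1+y))v$ (extended bilinearly). Let $L_{n,m}(V)=\mathrm{span}\{(\mathcal D+m-n)u:u\in V\}$ and $\tilde O'_{g,n,m}(V)=\mathrm{span}\{u\diamond_{g,m}^{\,n}v:u,v\in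 V\}+L_{n,m}(V)$. Let $\tilde O''_{g,n,m}(V)$ be the span of all $u\bullet_{g,m,p_3}^{\,n}\big((a\bullet_{g,p_1,p_2}^{\,p_3}b)\bullet_{g,m,p_1}^{\,p_3}c-a\bullet_{g,m,p_2}^{\,p_3}(b\bullet_{g,m,p_1}^{\,p_2}c)\big)$ with $a,b,c,u\in V$, $p_1,p_2,p_3\in(1/T)\mathbb N$; let $\tilde O'''_{g,n,m}(V)=\sum_{p_1,p_2\in(1/T)\mathbb N}\big(V\bullet_{g,p_1,p_2}^{\,n}\tilde O'_{g,p_2,p_1}(V)\big)\bullet_{g,m,p_1}^{\,n}V$ (spans of such products); and $\tilde O_{g,n,m}(V)=\tilde O'_{g,n,m}(V)+\tilde O''_{g,n,m}(V)+\tilde O'''_{g,n,m}(V)$. Finally $\tilde O_{g,n}(V)=\tilde O'_{g,n,n}(V)$ and $\tilde A_{g,n}(V)=V/\tilde O_{g,n}(V)$, which is an associative algebra with product induced by $\bullet_{g,n}$ and unit $\mathbf 1+\tilde O_{g,n}(V)$. *)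

From HB Require Import structures.
From mathcomp Require Import all_boot all_order all_algebra.
Set Implicit Arguments. Unset Strict Implicit. Unset Printing Implicit Defensive.
Import Order.TTheory GRing.Theory Num.Theory.
Local Open Scope ring_scope.

(* Vertex algebras (Lepowsky--Li axioms: truncation, vacuum, creation,      *)
(* Jacobi/Borcherds identity) over a field K.  vY u k v is the mode u_k v.  *)

Definition gbinom (K : fieldType) (a : K) (i : nat) : K :=
  (\prod_(j < i) (a - j%:R)) / (i`!)%:R.

Record vertex_algebra (K : fieldType) (V : lmodType K) := VertexAlgebra {
  vY : V -> int -> V -> V;
  vvac : V;
  vtrunc : V -> V -> nat;
  vY_linl : forall (k : int) (v : V) (a : K) (u1 u2 : V),
      vY (a *: u1 + u2) k v = a *: vY u1 k v + vY u2 k v;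
  vY_linr : forall (u : V) (k : int) (a : K) (v1 v2 : V),
      vY u k (a *: v1 + v2) = a *: vY u k v1 + vY u k v2;
  vY_trunc : forall (u v : V) (k : int), (vtrunc u v)%:Z <= k -> vY u k v = 0;
  vY_vacuum : forall (k : int) (v : V), vY vvac k v = if k == -1 then v else 0;
  vY_creation0 : forall (u : V) (k : int), 0 <= k -> vY u k vvac = 0;
  vY_creation1 : forall u : V, vY u (-1) vvac = u;
  vY_jacobi : forall (u w v : V) (p q r : int),
      \sum_(i < absz ((vtrunc u w)%:Z - r))
          gbinom (p%:~R) i *: vY (vY u (r + i%:Z) w) (p + q - i%:Z) v
      = \sum_(i < absz ((vtrunc w v)%:Z - q))
          ((-1) ^+ i * gbinom (r%:~R) i) *: vY u (p + r - i%:Z) (vY w (q + i%:Z) v)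
        - ((-1) ^ r) *: \sum_(i < absz ((vtrunc u v)%:Z - p))
          ((-1) ^+ i * gbinom (r%:~R) i) *: vY w (q + r - i%:Z) (vY u (p + i%:Z) v)
}.

Section PowerSeries.
Variable K : fieldType.
Definition ps := nat -> K.
Definition ps1 : ps := fun n => (n == 0%N)%:R.
Definition psmul (f g : ps) : ps := fun n => \sum_(i < n.+1) f i * g (n - i)%N.
Definition psexp (f : ps) (k : nat) : ps := iter k (psmul f) ps1.
(* coefficients b_0..b_n of the inverse series of f (f 0 <> 0) *)
Fixpoint psinv_seq (f : ps) (n : nat) : seq K :=
  match n with
  | 0 => [:: (f 0%N)^-1]
  | n'.+1 => let s := psinv_seq f n' in
      rcons s (- (f 0%N)^-1 * \sum_(i < n'.+1) f i.+1 * nth 0 s (n' - i)%N)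
  end.
Definition psinv (f : ps) : ps := fun n => nth 0 (psinv_seq f n) n.
Definition pszexp (f : ps) (e : int) : ps :=
  match e with Posz k => psexp f k | Negz k => psexp (psinv f) k.+1 end.
(* (1+y)^a = sum_k binom(a,k) y^k *)
Definition binser (a : K) : ps := fun k => gbinom a k.
(* log(1+y)/y = sum_{n>=0} (-1)^n y^n/(n+1) *)
Definition logy : ps := fun n => (-1) ^+ n / (n.+1)%:R.
(* Res_y (1+y)^a y^(-N) (log(1+y))^(-k-1)
   = coefficient of y^(N+k) in (1+y)^a (log(1+y)/y)^(-k-1) *)
Definition resc (a : K) (N k : int) : K :=
  if (0 <= N + k) then psmul (binser a) (pszexp logy (- k - 1)) (absz (N + k))
  else 0.
End PowerSeries.

Section Twisted.
Variables (K : fieldType) (V : lmodType K) (A : vertex_algebra V).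
Variables (T : nat) (om : K) (g : V -> V).

(* Res_y (1+y)^a / y^N  Y(u, log(1+y)) v  (a finite sum by truncation) *)
Definition resY (a : K) (N : int) (u v : V) : V :=
  \sum_(i < (vtrunc A u v + absz N)%N)
     resc a N (i%:Z - (absz N)%:Z) *: vY A u (i%:Z - (absz N)%:Z) v.

(* projection of u on V^r = {v | g v = om^r v}, with om = e^{-2 pi i / T} *)
Definition proj (r : nat) (u : V) : V :=
  (T%:R)^-1 *: \sum_(j < T) (om ^+ (r * j))^-1 *: iter j g u.

(* Elements of (1/T)N are represented by their numerators: m = M / T.
   floor m = M %/ T,  bar m = M %% T. *)
Definition delta (k l : nat) : nat := (l <= k)%N.

(* u bullet_{g,m,p}^n v for u in V^r ; here m = M/T, p = P/T, n = N/T *)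
Definition bullet_h (r M P N : nat) (u v : V) : V :=
  let fm := (M %/ T)%N in let bm := (M %% T)%N in
  let fn := (N %/ T)%N in let bn := (N %% T)%N in
  let fp := (P %/ T)%N in let bp := (P %% T)%N in
  let d1 := delta bm r in let d2 := delta bn (T - r) in
  let alpha : K := (- 1 + fm%:Z + d1%:Z)%:~R + r%:R / T%:R in
  if ((bp + T - bn) %% T == r %% T)%N then
    \sum_(i < fp.+1)
      ((-1) ^+ i * gbinom ((fm%:Z + fn%:Z - fp%:Z - 1 + d1%:Z + d2%:Z + i%:Z)%:~R) i)
        *: resY alpha (fm%:Z + fn%:Z - fp%:Z + d1%:Z + d2%:Z + i%:Z) u v
  else 0.

Definition bullet (M P N : nat) (u v : V) : V :=
  \sum_(r < T) bullet_h r M P N (proj r u) v.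

(* u diamond_{g,m}^n v for u in V^r *)
Definition diamond_h (r M N : nat) (u v : V) : V :=
  let fm := (M %/ T)%N in let bm := (M %% T)%N in
  let fn := (N %/ T)%N in let bn := (N %% T)%N in
  let d1 := delta bm r in let d2 := delta bn (T - r) in
  let alpha : K := (- 1 + fm%:Z + d1%:Z)%:~R + r%:R / T%:R in
  resY alpha (fm%:Z + fn%:Z + d1%:Z + d2%:Z + 1) u v.

Definition diamond (M N : nat) (u v : V) : V :=
  \sum_(r < T) diamond_h r M N (proj r u) v.

Definition vD (u : V) : V := vY A u (-2) (vvac A).

Inductive span (P : V -> Prop) : V -> Prop :=
| span0 : span P 0
| span_gen : forall x, P x -> span P x
| span_add : forall x y, span P x -> span P y -> span P (x + y)
| span_scale : forall (a : K) x, span P x -> span P (a *: x).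

Definition O1 (N M : nat) : V -> Prop :=
  span (fun w => (exists u v, w = diamond M N u v)
              \/ (exists u, w = vD u + ((M%:R - N%:R) / T%:R) *: u)).

Definition O2 (N M : nat) : V -> Prop :=
  span (fun w => exists (a b c u : V) (p1 p2 p3 : nat),
     w = bullet M p3 N u
           (bullet M p1 p3 (bullet p1 p2 p3 a b) c
            - bullet M p2 p3 a (bullet M p1 p2 b c))).

Definition O3 (N M : nat) : V -> Prop :=
  span (fun w => exists (p1 p2 : nat) (z y : V),
     span (fun z' => exists x o, O1 p2 p1 o /\ z' = bullet p1 p2 N x o) z
     /\ w = bullet M p1 N z y).

Definition Otilde (N M : nat) : V -> Prop :=
  span (fun w => O1 N M w \/ O2 N M w \/ O3 N M w).

Definition On (N : nat) : V -> Prop := O1 N N.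

End Twisted.

(* The relations defining [Otilde] contain the associativity relations of the
   products (the generators of [O''] with [u = 1], since [1] is a left unit),
   and [O'''] absorbs every product with an element of [O'].  So the closure of
   [Otilde] under both actions and all bimodule identities follow by rewriting
   with associativity, except for one vertex-algebraic fact: [w bullet 1 = w]
   modulo [O'_{g,n,m}(V)].  To see it, split [w] into eigenvectors of [g].
   Modulo [L_{n,m}(V)] we have [u_{-k-1} 1 = D^k u / k! = (n - m)^k u / k!],
   hence [Res_y (1 + y)^a y^(-e-1) Y(u, log (1 + y)) 1 = binom(a + n - m, e) u],
   because [(1 + y)^a exp ((n - m) log (1 + y)) = (1 + y)^(a + n - m)].  For an
   eigenvector compatible with [n] and [m] the exponent [a + n - m] is
   [floor n] and the binomial sum defining the product collapses to [u];
   otherwise [a + n - m] is not a natural number, so [u diamond 1] is a nonzero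
   multiple of [u] modulo [L_{n,m}(V)] and [u] lies in [O'_{g,n,m}(V)]. *)

From HB Require Import structures.
From mathcomp Require Import all_boot all_order all_algebra.
From mathcomp Require Import ring zify.
From Pilot Require Import Defs.
Import Order.TTheory GRing.Theory Num.Theory.
Local Open Scope ring_scope.
Set Implicit Arguments. Unset Strict Implicit.

Section LinearFun.
Variables (K : fieldType) (U V : lmodType K) (f : U -> V).
Hypothesis f_lin : linear f.

Let fL : {linear U -> V} := HB.pack f (GRing.isLinear.Build _ _ _ _ f f_lin).

Lemma lin0 : f 0 = 0. Proof. exact: (raddf0 fL). Qed.
Lemma linD x y : f (x + y) = f x + f y. Proof. exact: (raddfD fL). Qed.
Lemma linB x y : f (x - y) = f x - f y. Proof. exact: (raddfB fL). Qed.
Lemma linZ a x : f (a *: x) = a *: f x. Proof. exact: (linearZZ fL). Qed.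

Lemma lin_sum (I : Type) (r : seq I) (P : pred I) (F : I -> U) :
  f (\sum_(i <- r | P i) F i) = \sum_(i <- r | P i) f (F i).
Proof. exact: (raddf_sum fL). Qed.

End LinearFun.

Lemma linear_comp (K : fieldType) (U V W : lmodType K) (f : V -> W) (h : U -> V) :
  linear f -> linear h -> linear (f \o h).
Proof. by move=> f_lin h_lin a x y /=; rewrite h_lin f_lin. Qed.

Lemma linear_iter (K : fieldType) (V : lmodType K) (f : V -> V) n :
  linear f -> linear (iter n f).
Proof. by move=> f_lin a x y; elim: n => //= n ->; rewrite f_lin. Qed.

Section Span.
Variables (K : fieldType) (V : lmodType K).
Implicit Types (P Q : V -> Prop) (x y : V).

Lemma span_opp P x : span P x -> span P (- x).
Proof. by rewrite -scaleN1r; apply: span_scale. Qed.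

Lemma span_sub P x y : span P x -> span P y -> span P (x - y).
Proof. by move=> Px Py; apply: span_add => //; apply: span_opp. Qed.

Lemma span_sum P (I : finType) (F : I -> V) :
  (forall i, span P (F i)) -> span P (\sum_i F i).
Proof. by move=> PF; apply: (big_ind (span P)) => //; [apply: span0 | apply: span_add]. Qed.

Lemma span_image P Q (f : V -> V) : linear f ->
  (forall x, P x -> span Q (f x)) -> forall x, span P x -> span Q (f x).
Proof.
move=> f_lin PQ x; elim=> {x} [|x /PQ //|x y _ Qx _ Qy|a x _ Qx].
- by rewrite lin0 //; apply: span0.
- by rewrite linD //; apply: span_add.
- by rewrite linZ //; apply: span_scale.
Qed.

Lemma span_mono P Q : (forall x, P x -> Q x) -> forall x, span P x -> span Q x.
Proof.
move=> PQ; apply: (@span_image P Q id) => [a x y //|x Px]; exact/span_gen/PQ.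
Qed.

Lemma span_subr P x y : span P (x - y) -> span P y -> span P x.
Proof. by move=> Pxy Py; rewrite -(subrK y x); apply: span_add. Qed.

Lemma span_subC P x y : span P (x - y) -> span P (y - x).
Proof. by move=> Pxy; rewrite -opprB; apply: span_opp. Qed.

Lemma span_sub_trans P x y z :
  span P (x - y) -> span P (y - z) -> span P (x - z).
Proof. by move=> Pxy Pyz; rewrite -(subrKA y); apply: span_add. Qed.

Lemma span_subB P x y x' y' :
  span P (x - x') -> span P (y - y') -> span P ((x - y) - (x' - y')).
Proof.
move=> Pxx' Pyy'; rewrite (_ : _ - _ = (x - x') - (y - y')); first exact: span_sub.
by rewrite !opprD !opprK addrACA.
Qed.

Lemma span_lincomb_sub P n (cf bs : 'I_n -> K) (F : 'I_n -> V) x :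
  (forall i, span P (F i - bs i *: x)) -> \sum_i cf i * bs i = 1 ->
  span P (\sum_i cf i *: F i - x).
Proof.
move=> PF sum1; rewrite -{1}(scale1r x) -sum1 scaler_suml -sumrB.
apply: span_sum => i; rewrite -scalerA -scalerBr; exact/span_scale/PF.
Qed.

End Span.

Section PowerSeries.
Variable K : fieldType.
Hypothesis K_char0 : [pchar K] =i pred0.

Lemma natf_eq0 n : (n%:R == 0 :> K) = (n == 0)%N.
Proof. exact: (pcharf0P _).1 K_char0 n. Qed.

Lemma natS_neq0 n : (n.+1%:R : K) != 0.
Proof. by rewrite natf_eq0. Qed.

Lemma fact_neq0 n : ((n`!)%:R : K) != 0.
Proof. by rewrite natf_eq0 -lt0n fact_gt0. Qed.

Lemma natf_inj : injective (fun n : nat => n%:R : K).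
Proof.
move=> m n /eqP; wlog le_mn : m n / (m <= n)%N => [hw|].
  case: (leqP m n) => [le_mn /hw|/ltnW le_nm]; first exact.
  by rewrite eq_sym => /(hw _ _ le_nm).
by rewrite eq_sym -subr_eq0 -natrB // natf_eq0 subn_eq0 => le_nm; apply/eqP; rewrite eqn_leq le_mn.
Qed.

Local Ltac nonzero :=
  repeat (apply/andP; split);
  rewrite ?nat1r ?natS_neq0 ?fact_neq0 -?natrD ?natf_eq0 //.

Lemma psmulC (f h : ps K) n : psmul f h n = psmul h f n.
Proof.
rewrite /psmul (reindex_inj rev_ord_inj) /=; apply: eq_bigr => i _.
by rewrite subSS subKn 1?mulrC // -ltnS.
Qed.

Lemma eq_psmul (f f' h h' : ps K) n :
  f =1 f' -> h =1 h' -> psmul f h n = psmul f' h' n.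
Proof. by move=> ff' hh'; apply: eq_bigr => i _; rewrite ff' hh'. Qed.

Lemma psmulZl (a : K) (f h : ps K) n :
  psmul (fun i => a * f i) h n = a * psmul f h n.
Proof. by rewrite /psmul mulr_sumr; apply: eq_bigr => i _; rewrite mulrA. Qed.

Lemma psmulZr (a : K) (f h : ps K) n :
  psmul f (fun i => a * h i) n = a * psmul f h n.
Proof. by rewrite psmulC psmulZl psmulC. Qed.

Lemma psmul1l (f : ps K) n : psmul (ps1 K) f n = f n.
Proof.
rewrite /psmul big_ord_recl /ps1 /= mul1r subn0 big1 ?addr0 // => i _.
by rewrite mul0r.
Qed.

Lemma psexpS (f : ps K) k : psexp f k.+1 = psmul f (psexp f k).
Proof. by []. Qed.

Definition psshift (k : nat) (h : ps K) : ps K :=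
  fun n => if (k <= n)%N then h (n - k)%N else 0.

Lemma psmul_shift (f h : ps K) k n :
  psmul f (psshift k h) n = if (k <= n)%N then psmul f h (n - k)%N else 0.
Proof.
rewrite /psmul /psshift; case: (leqP k n) => kn; last first.
  rewrite big1 // => i _; have := ltn_ord i.
  by case: (leqP k (n - i)) => ? ?; [lia | rewrite mulr0].
have le_nk : ((n - k).+1 <= n.+1)%N by rewrite ltnS leq_subr.
rewrite (big_ord_widen _ (fun i => f i * h (n - k - i)%N) le_nk) [RHS]big_mkcond.
apply: eq_bigr => i _; have := ltn_ord i.
case: (leqP k (n - i)) => ?; case: (ltnP i (n - k).+1) => ? ?.
- by rewrite subnAC.
- lia.
- lia.
- by rewrite mulr0.
Qed.

(* The Euler operator [(1 + y) d/dy]. *)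
Definition euler (f : ps K) : ps K := fun n => n.+1%:R * f n.+1 + n%:R * f n.

Lemma euler_mul (f h : ps K) n :
  euler (psmul f h) n = psmul (euler f) h n + psmul f (euler h) n.
Proof.
rewrite /euler /psmul.
have E1 : \sum_(i < n.+2) i%:R * f i * h (n.+1 - i)%N
        = \sum_(i < n.+1) i.+1%:R * f i.+1 * h (n - i)%N.
  by rewrite big_ord_recl /= !mul0r add0r; apply: eq_bigr => i _; rewrite subSS.
have E2 : \sum_(i < n.+2) (n.+1 - i)%:R * f i * h (n.+1 - i)%N
        = \sum_(i < n.+1) f i * ((n - i).+1%:R * h (n - i).+1).
  rewrite big_ord_recr /= subnn !mul0r addr0; apply: eq_bigr => i _.
  by rewrite subSn 1?mulrCA ?mulrA // -ltnS.
have split_weight m (F : nat -> K) : m%:R * \sum_(i < m.+1) f i * F (m - i)%N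
   = \sum_(i < m.+1) i%:R * f i * F (m - i)%N
     + \sum_(i < m.+1) (m - i)%:R * f i * F (m - i)%N.
  rewrite mulr_sumr -big_split; apply: eq_bigr => i _ /=.
  have -> : (m%:R : K) = i%:R + (m - i)%:R by rewrite -natrD subnKC // -ltnS.
  ring.
rewrite split_weight E1 E2 split_weight -!big_split /=.
by apply: eq_bigr => i _; ring.
Qed.

Lemma gbinom0 (a : K) : gbinom a 0 = 1.
Proof. by rewrite /gbinom big_ord0 fact0 divr1. Qed.

Lemma gbinomS (a : K) n : gbinom a n.+1 = gbinom a n * (a - n%:R) / n.+1%:R.
Proof.
rewrite /gbinom big_ord_recr /= factS natrM.
field; nonzero.
Qed.

Lemma gbinom1 (a : K) : gbinom a 1 = a.
Proof. by rewrite gbinomS gbinom0 subr0 mul1r divr1. Qed.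

Lemma gbinom_nat n k : gbinom (n%:R : K) k = 'C(n, k)%:R.
Proof.
elim: k => [|k IHk]; first by rewrite gbinom0 bin0.
rewrite gbinomS IHk; apply: (@mulIf _ k.+1%:R); first exact: natS_neq0.
rewrite mulfVK ?natS_neq0 // -natrM mulnC mul_bin_left.
case: (leqP k n) => [le_kn|lt_nk]; first by rewrite natrM natrB // mulrC.
by rewrite bin_small // muln0 mul0r.
Qed.

Lemma gbinom_neq0 (b : K) k : (forall j : nat, b != j%:R) -> gbinom b k != 0.
Proof.
move=> b_nat; rewrite /gbinom mulf_neq0 ?invr_eq0 ?fact_neq0 //.
by rewrite prodf_seq_neq0; apply/allP => j _; rewrite subr_eq0 b_nat.
Qed.

Lemma euler_binser (a : K) n : euler (binser a) n = a * binser a n.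
Proof. rewrite /euler /binser gbinomS; field; nonzero. Qed.

Lemma euler_eigen_binser (f : ps K) (l : K) :
  (forall n, euler f n = l * f n) -> f 0%N = 1 -> f =1 binser l.
Proof.
move=> eig f0; elim=> [|n IHn]; first by rewrite f0 /binser gbinom0.
have := eig n; rewrite /euler IHn /binser gbinomS => E.
apply: (mulfI (natS_neq0 n)); rewrite mulrCA mulfV ?natS_neq0 // mulr1.
by apply: (addIr (n%:R * gbinom l n)); rewrite E; ring.
Qed.

Lemma euler_ps1 n : euler (ps1 K) n = 0.
Proof. by rewrite /euler /ps1; case: n => [|n]; rewrite /= ?mulr0 ?mul0r ?addr0. Qed.

(* [log (1 + y) = y * logy]. *)
Definition pslog : ps K := psshift 1 (logy K).

Lemma euler_pslog n : euler pslog n = (n == 0)%N%:R.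
Proof.
rewrite /euler /pslog /psshift /logy; case: n => [|n] /=.
  by rewrite subnn expr0 mul1r mul0r addr0 divr1.
rewrite !subn1 /= exprS.
field; nonzero.
Qed.

Lemma psexp_pslog k n : psexp pslog k n = psshift k (psexp (logy K) k) n.
Proof.
elim: k n => [|k IHk] n; first by rewrite /psshift /= subn0.
rewrite psexpS (@eq_psmul _ pslog _ (psshift k (psexp (logy K) k))) //.
rewrite psmulC psmul_shift /psshift.
case: (leqP 1 n) => n_gt0; last by case: n n_gt0.
rewrite psmulC psmul_shift.
case: (leqP k (n - 1)) => ?; case: (leqP k.+1 n) => ? //; try lia.
by rewrite psexpS; congr psmul; lia.
Qed.

Lemma psexp_pslog_small k n : (n < k)%N -> psexp pslog k n = 0.
Proof. by move=> lt_nk; rewrite psexp_pslog /psshift leqNgt lt_nk. Qed.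

Lemma euler_psexp_pslog k n : euler (psexp pslog k) n = k%:R * psexp pslog k.-1 n.
Proof.
elim: k n => [|k IHk] n; first by rewrite euler_ps1 mul0r.
rewrite psexpS euler_mul (@eq_psmul _ (ps1 K) _ (psexp pslog k)) //; last first.
  by move=> i; rewrite euler_pslog.
rewrite psmul1l (@eq_psmul _ pslog _ (fun i => k%:R * psexp pslog k.-1 i)) //.
rewrite psmulZr; case: k IHk => [|k] _ /=; first by rewrite mul0r addr0 mul1r.
by rewrite -psexpS -addn1 natrD; ring.
Qed.

Definition exp_coef (c : K) (k : nat) : K := (- c) ^+ k / (k`!)%:R.

(* [(1 + y)^(-c) = exp (- c log (1 + y))]. *)
Definition pow_log (c : K) : ps K :=
  fun n => \sum_(k < n.+1) exp_coef c k * psexp pslog k n.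

Lemma pow_log_widen c n B : (n < B)%N ->
  \sum_(k < B) exp_coef c k * psexp pslog k n = pow_log c n.
Proof.
move=> lt_nB; rewrite /pow_log (big_ord_widen _ (fun k => exp_coef c k * psexp pslog k n) lt_nB).
rewrite [RHS]big_mkcond /=; apply: eq_bigr => k _.
by case: ltnP => // ?; rewrite psexp_pslog_small ?mulr0.
Qed.

Lemma euler_pow_log c n : euler (pow_log c) n = - c * pow_log c n.
Proof.
rewrite {1}/euler -(@pow_log_widen c n n.+2) // {1}/pow_log !mulr_sumr -big_split /=.
rewrite (eq_bigr (fun k : 'I_n.+2 => exp_coef c k * (k%:R * psexp pslog k.-1 n))); last first.
  by move=> k _; rewrite -euler_psexp_pslog /euler; ring.
rewrite big_ord_recl /= mul0r mulr0 add0r -mulr_sumr (@pow_log_widen c n n.+2) //.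
rewrite -(@pow_log_widen c n n.+1) // mulr_sumr; apply: eq_bigr => k _ /=.
rewrite /exp_coef /bump /= factS natrM exprS.
field; nonzero.
Qed.

Lemma pow_log0 c : pow_log c 0%N = 1.
Proof. by rewrite /pow_log big_ord1 /exp_coef /= expr0 fact0 divr1 mul1r. Qed.

(* Both sides are coefficients of [(1 + y)^a (1 + y)^(-c)]: the Euler operator
   acts on this product by the eigenvalue [a - c]. *)
Lemma binser_logy_exp_sum (a c : K) (e : nat) :
  \sum_(k < e.+1) psmul (binser a) (psexp (logy K) k) (e - k)%N * exp_coef c k
  = gbinom (a - c) e.
Proof.
have prod_binser : psmul (binser a) (pow_log c) =1 binser (a - c).
  apply: euler_eigen_binser => [n|]; last first.
    by rewrite /psmul big_ord1 /binser gbinom0 pow_log0 mulr1.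
  have Ea : psmul (euler (binser a)) (pow_log c) n = a * psmul (binser a) (pow_log c) n.
    by rewrite -psmulZl; apply: eq_psmul => // i; apply: euler_binser.
  have Ec : psmul (binser a) (euler (pow_log c)) n = - c * psmul (binser a) (pow_log c) n.
    by rewrite -psmulZr; apply: eq_psmul => // i; apply: euler_pow_log.
  by rewrite euler_mul Ea Ec; ring.
rewrite -[RHS]prod_binser /psmul.
rewrite [RHS](eq_bigr (fun i : 'I_e.+1 => \sum_(k < e.+1)
    binser a i * (exp_coef c k * psexp pslog k (e - i)%N))); last first.
  by move=> i _; rewrite -(@pow_log_widen c (e - i) e.+1) ?mulr_sumr // ltnS leq_subr.
rewrite exchange_big /=; apply: eq_bigr => k _.
have := psmul_shift (binser a) (psexp (logy K) k) k e; rewrite -ltnS ltn_ord /psmul => <-.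
by rewrite mulr_suml; apply: eq_bigr => i _; rewrite psexp_pslog; ring.
Qed.

End PowerSeries.

Section VertexAlgebra.
Variables (K : fieldType) (V : lmodType K) (A : vertex_algebra V).
Hypothesis K_char0 : [pchar K] =i pred0.

Local Notation vY := (vY A).
Local Notation vac := (vvac A).

Lemma vY_linear_l k v : linear (fun u => vY u k v).
Proof. exact: vY_linl. Qed.

Lemma vY_linear_r u k : linear (vY u k).
Proof. exact: vY_linr. Qed.

(* The Jacobi identity for [(u, 1, v)] with [(p, q, r) = (p, 0, -2)]. *)
Lemma vY_vD u p v : vY (vD A u) p v = - (p%:~R) *: vY u (p - 1) v.
Proof.
have J := vY_jacobi A u vac v p 0 (-2).
have Elen : absz ((vtrunc A u vac)%:Z - (-2 : int)) = (vtrunc A u vac).+2 by lia.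
rewrite Elen !big_ord_recl /= in J.
rewrite big1 in J => [|i _]; last first.
  have -> : -2 + (bump 0 (bump 0 i))%:Z = i%:Z by rewrite /bump /=; lia.
  by rewrite vY_creation0 // (lin0 (vY_linear_l _ _)) scaler0.
rewrite big1 in J => [|i _]; last first.
  rewrite vY_vacuum; have -> : (0 + i%:Z == -1) = false by apply/eqP; lia.
  by rewrite (lin0 (vY_linear_r _ _)) scaler0.
rewrite [X in _ - _ *: X]big1 in J => [|i _]; last first.
  by rewrite vY_vacuum (_ : (0 + -2 - i%:Z == -1) = false) ?scaler0 //; apply/eqP; lia.
have E : -2 + (bump 0 0)%:Z = -1 by [].
rewrite E subr0 !addr0 gbinom1 // gbinom0 vY_creation1 scale1r scaler0 subr0 in J.
by apply/eqP; rewrite scaleNr -subr_eq0 opprK; apply/eqP.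
Qed.

Lemma vY_vac_neg k u : vY u (- (k.+1)%:Z) vac = ((k`!)%:R)^-1 *: iter k (vD A) u.
Proof.
elim: k u => [|k IHk] u; first by rewrite /= fact0 invr1 scale1r vY_creation1.
have := vY_vD u (- (k.+1)%:Z) vac; rewrite IHk.
have -> : - (k.+1)%:Z - 1 = - (k.+2)%:Z by lia.
rewrite mulrNz opprK => D.
rewrite iterSr factS natrM invfM -scalerA D scalerA mulVf ?scale1r //.
exact: natS_neq0.
Qed.

(* [L_{n,m}(V)] of the paper, with [c = m - n]. *)
Definition Lspace (c : K) : V -> Prop := span (fun w => exists u, w = vD A u + c *: u).

Lemma iter_vD_Lspace c k x : Lspace c (iter k (vD A) x - (- c) ^+ k *: x).
Proof.
elim: k => [|k IHk]; first by rewrite /= expr0 scale1r subrr; apply: span0.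
set y := iter k (vD A) x.
have -> : iter k.+1 (vD A) x - (- c) ^+ k.+1 *: x
        = (vD A y + c *: y) + (- c) *: (y - (- c) ^+ k *: x).
  by rewrite scalerBr scalerA -exprS scaleNr addrA addrK.
by apply: span_add; [apply: span_gen; exists y | apply: span_scale].
Qed.

Lemma resc_neg (a : K) e k : (k <= e)%N ->
  resc a (Posz e.+1) (- (k.+1)%:Z) = psmul (binser a) (psexp (logy K) k) (e - k)%N.
Proof.
move=> le_ke; rewrite /resc ifT; last lia.
have -> : - - (k.+1)%:Z - 1 = Posz k by lia.
by have -> : absz (Posz e.+1 + - (k.+1)%:Z) = (e - k)%N by lia.
Qed.

Lemma resY_vac (a : K) e x :
  resY A a (Posz e.+1) x vac
  = \sum_(k < e.+1) psmul (binser a) (psexp (logy K) k) (e - k)%N *: vY x (- (k.+1)%:Z) vac.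
Proof.
rewrite /resY /= addnC big_split_ord /= [X in _ + X]big1 ?addr0 => [|i _]; last first.
  by rewrite vY_creation0 ?scaler0 //; lia.
rewrite (reindex_inj rev_ord_inj) /=; apply: eq_bigr => k _.
have -> : ((e.+1 - k.+1)%N%:Z - (e.+1)%:Z) = - (k.+1)%:Z by have := ltn_ord k; lia.
by rewrite resc_neg // -ltnS.
Qed.

(* Modulo [L], [u_(-k-1) 1 = D^k u / k!] may be replaced by [(- c)^k u / k!]. *)
Lemma resY_vac_Lspace (a c : K) e x :
  Lspace c (resY A a (Posz e.+1) x vac - gbinom (a - c) e *: x).
Proof.
rewrite resY_vac -(binser_logy_exp_sum K_char0 a c e) scaler_suml -sumrB.
apply: span_sum => k; rewrite vY_vac_neg // scalerA.
set r := psmul _ _ _.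
have -> : r * exp_coef c k = (r / (k`!)%:R) * (- c) ^+ k by rewrite /exp_coef; ring.
by rewrite -[X in _ - X]scalerA -scalerBr; apply/span_scale/iter_vD_Lspace.
Qed.

Lemma resY_vacl (a : K) e w : resY A a (Posz e.+1) vac w = gbinom a e *: w.
Proof.
rewrite /resY /=.
have lt_e : (e < vtrunc A vac w + e.+1)%N by lia.
rewrite (bigD1 (Ordinal lt_e)) //= big1 ?addr0 => [|i ne_ie]; last first.
  rewrite vY_vacuum (_ : (_ == -1) = false) ?scaler0 //; apply/eqP => E.
  by move: ne_ie => /eqP; apply; apply: val_inj => /=; lia.
have -> : (e%:Z - (e.+1)%:Z) = - (1%N)%:Z by lia.
by rewrite vY_vacuum eqxx (@resc_neg a e 0) // subn0 psmulC psmul1l.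
Qed.

Lemma resY_widen a E u v B : (vtrunc A u v + absz E <= B)%N ->
  resY A a E u v
  = \sum_(i < B) resc a E (i%:Z - (absz E)%:Z) *: vY u (i%:Z - (absz E)%:Z) v.
Proof.
move=> le_B; rewrite /resY (big_ord_widen B
  (fun i : nat => resc a E (i%:Z - (absz E)%:Z) *: vY u (i%:Z - (absz E)%:Z) v) le_B).
rewrite big_mkcond /=; apply: eq_bigr => i _.
by case: ltnP => // ?; rewrite vY_trunc ?scaler0 //; lia.
Qed.

Lemma resY_linear_l a E v : linear (fun u => resY A a E u v).
Proof.
move=> b x y; set B := (vtrunc A (b *: x + y) v + vtrunc A x v + vtrunc A y v + absz E)%N.
rewrite !(@resY_widen _ _ _ _ B) ?/B; try lia.
rewrite scaler_sumr -big_split; apply: eq_bigr => i _ /=.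
by rewrite vY_linl scalerDr !scalerA mulrC.
Qed.

Lemma resY_linear_r a E u : linear (resY A a E u).
Proof.
move=> b x y; set B := (vtrunc A u (b *: x + y) + vtrunc A u x + vtrunc A u y + absz E)%N.
rewrite !(@resY_widen _ _ _ _ B) ?/B; try lia.
rewrite scaler_sumr -big_split; apply: eq_bigr => i _ /=.
by rewrite vY_linr scalerDr !scalerA mulrC.
Qed.

End VertexAlgebra.

Lemma sum_unity_root_eq0 (K : fieldType) (z : K) n :
  z ^+ n = 1 -> z != 1 -> \sum_(j < n) z ^+ j = 0.
Proof.
move=> zn1 z_neq1; have := subrX1 z n; rewrite zn1 subrr => /esym/eqP.
by rewrite mulf_eq0 subr_eq0 (negbTE z_neq1) => /eqP.
Qed.

Lemma sum_shift_periodic (W : zmodType) n (f : nat -> W) :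
  (forall j, f (j + n)%N = f j) -> \sum_(j < n) f j.+1 = \sum_(j < n) f j.
Proof.
case: n => [|n] f_per; first by rewrite !big_ord0.
by rewrite big_ord_recr big_ord_recl addrC /= -(f_per 0%N) add0n.
Qed.

Section TwistCondition.
Variables (T bm bn r : nat).
Hypotheses (bm_lt : (bm < T)%N) (bn_lt : (bn < T)%N) (r_lt : (r < T)%N).

Lemma twist_cond_delta : (bm + T - bn = r %[mod T])%N ->
  ((r <= bm) * T + r + bn = bm + T)%N /\ ((r <= bm) + (T - r <= bn) = 1)%N.
Proof.
rewrite (modn_small r_lt); case: (leqP bn bm) => [le_nm|lt_mn].
  rewrite -addnBAC // modnDr modn_small => [E|]; last lia.
  by case: (leqP r bm) => ?; case: (leqP (T - r) bn) => ? /=; lia.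
rewrite modn_small => [E|]; last lia.
by case: (leqP r bm) => ?; case: (leqP (T - r) bn) => ? /=; lia.
Qed.

Lemma twist_cond_of_eq q1 q2 : (q1 * T + r + bn = q2 * T + bm)%N ->
  (bm + T - bn == r %[mod T])%N.
Proof.
move=> E; have [Ebm|EbmT] : (r + bn = bm \/ r + bn = bm + T)%N.
  case: (leqP q2 q1) => [le21|lt12].
    rewrite -(subnK le21) mulnDl in E.
    by case: (q1 - q2)%N E => [|k] E; [left | rewrite mulSn in E]; lia.
  rewrite -(subnK lt12) mulnDl mulSn in E.
  by case: (q2 - q1.+1)%N E => [|k] E; [right | rewrite mulSn in E]; lia.
- by rewrite (_ : bm + T - bn = r + T)%N ?modnDr //; lia.
- by rewrite (_ : bm + T - bn = r)%N //; lia.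
Qed.

End TwistCondition.

Section Twisted.
Variables (K : fieldType) (V : lmodType K) (A : vertex_algebra V).
Variables (T : nat) (om : K) (g : V -> V).
Hypothesis K_char0 : [pchar K] =i pred0.
Hypothesis om_prim : T.-primitive_root om.
Hypothesis g_lin : linear g.
Hypothesis g_vac : g (vvac A) = vvac A.
Hypothesis g_order : forall v : V, iter T g v = v.

Local Notation vac := (vvac A).
Local Notation proj := (proj T om g).

Lemma T_gt0 : (0 < T)%N.
Proof. exact: prim_order_gt0 om_prim. Qed.

Lemma natT_neq0 : (T%:R : K) != 0.
Proof. by rewrite natf_eq0 // -lt0n T_gt0. Qed.

Lemma omX_neq0 k : om ^+ k != 0.
Proof.
apply/expf_neq0/eqP => om0; have := prim_expr_order om_prim.
by rewrite om0 expr0n gtn_eqF ?T_gt0 // => /esym/eqP; rewrite oner_eq0.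
Qed.

Lemma sum_om_inv r :
  \sum_(j < T) (om ^+ (r * j))^-1 = if (T %| r)%N then T%:R else 0.
Proof.
under eq_bigr do rewrite exprM -exprVn.
case: ifPn => [T_dvd_r|T_ndvd_r].
  rewrite (_ : om ^+ r = 1) ?invr1; last by apply/eqP; rewrite -(prim_order_dvd om_prim).
  by under eq_bigr do rewrite expr1n; rewrite sumr_const card_ord.
apply: sum_unity_root_eq0.
  by rewrite exprVn -exprM mulnC exprM (prim_expr_order om_prim) expr1n invr1.
by rewrite invr_eq1 -(prim_order_dvd om_prim).
Qed.

Lemma proj_linear r : linear (proj r).
Proof.
move=> a x y; rewrite /Defs.proj scalerA mulrC -scalerA -scalerDr; congr (_ *: _).
rewrite scaler_sumr -big_split; apply: eq_bigr => j _ /=.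
by rewrite (linear_iter j g_lin) scalerDr !scalerA mulrC.
Qed.

Lemma proj_vac r : (r < T)%N -> proj r vac = (r == 0)%N%:R *: vac.
Proof.
move=> lt_rT; rewrite /Defs.proj.
have iter_vac j : iter j g vac = vac by elim: j => //= j ->.
under eq_bigr do rewrite iter_vac.
rewrite -scaler_suml sum_om_inv scalerA.
case: (r =P 0)%N => [->|/eqP r_neq0]; first by rewrite dvdn0 mulVf ?natT_neq0.
by rewrite gtnNdvd ?lt0n ?mulr0.
Qed.

Lemma sum_proj w : \sum_(r < T) proj r w = w.
Proof.
rewrite /Defs.proj -scaler_sumr exchange_big /=.
have coef (j : 'I_T) : \sum_(r < T) (om ^+ (r * j))^-1 = (j == 0 :> nat)%:R * T%:R.
  under eq_bigr do rewrite mulnC.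
  rewrite sum_om_inv; case: (j =P 0 :> nat) => [->|/eqP j_neq0].
    by rewrite dvdn0 mul1r.
  by rewrite gtnNdvd ?lt0n ?mul0r.
under eq_bigr do rewrite -scaler_suml coef.
rewrite (bigD1 (Ordinal T_gt0)) //= big1 ?addr0 => [|j /eqP ne_j0]; last first.
  rewrite (_ : (j == 0 :> nat) = false) ?mul0r ?scale0r //.
  by apply/eqP => j0; apply: ne_j0; apply: val_inj.
by rewrite mul1r scalerA mulVf ?natT_neq0 ?scale1r.
Qed.

Lemma g_proj r w : g (proj r w) = om ^+ r *: proj r w.
Proof.
pose f j := (om ^+ (r * j))^-1 *: iter j g w.
have f_per j : f (j + T)%N = f j.
  rewrite /f iterD g_order mulnDr exprD (mulnC r T) [om ^+ (T * r)]exprM.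
  by rewrite (prim_expr_order om_prim) expr1n mulr1.
have f_step j : (om ^+ (r * j))^-1 *: g (iter j g w) = om ^+ r *: f j.+1.
  by rewrite /f scalerA mulnS exprD invfM mulrA mulfV ?omX_neq0 ?mul1r.
rewrite /Defs.proj (linZ g_lin) (lin_sum g_lin).
under eq_bigr do rewrite (linZ g_lin) f_step.
by rewrite -scaler_sumr sum_shift_periodic // scalerA mulrC -scalerA.
Qed.

Lemma iter_g_proj j r w : iter j g (proj r w) = om ^+ (r * j) *: proj r w.
Proof.
elim: j => [|j IHj] /=; first by rewrite muln0 expr0 scale1r.
by rewrite IHj (linZ g_lin) g_proj scalerA -exprD mulnS addnC.
Qed.

Lemma proj_proj r r' w : (r < T)%N -> (r' < T)%N ->
  proj r' (proj r w) = if r' == r then proj r w else 0.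
Proof.
move=> lt_r lt_r'; rewrite {1}/Defs.proj.
have omX_inv j : (om ^+ ((T - r) * j))^-1 = om ^+ (r * j).
  apply: (mulfI (omX_neq0 ((T - r) * j))); rewrite mulfV ?omX_neq0 //.
  by rewrite -exprD -mulnDl subnK ?(ltnW lt_r) // exprM (prim_expr_order om_prim) expr1n.
have coef j : (om ^+ (r' * j))^-1 *: iter j g (proj r w)
            = (om ^+ ((r' + (T - r)) * j))^-1 *: proj r w.
  by rewrite iter_g_proj scalerA mulnDl exprD invfM omX_inv.
under eq_bigr do rewrite coef.
have dvd_eq : (T %| r' + (T - r))%N = (r' == r).
  case: eqP => [->|ne_r]; first by rewrite subnKC ?dvdnn // ltnW.
  by apply/negP => /dvdnP [[|[|k]] E]; lia.
rewrite -scaler_suml sum_om_inv dvd_eq scalerA.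
by case: eqP => _; rewrite ?mulr0 ?scale0r // mulVf ?natT_neq0 ?scale1r.
Qed.

(* The exponent of [1 + y] in [bullet_h] and [diamond_h]. *)
Definition twist_exp (r M : nat) : K :=
  (-1 + (M %/ T)%N%:Z + (delta (M %% T) r)%:Z)%:~R + r%:R / T%:R.

Definition mminusn (M N : nat) : K := (M%:R - N%:R) / T%:R.

Lemma twist_exp_sub_natE r M N j :
  (twist_exp r M - mminusn M N == j%:R) =
  ((delta (M %% T) r + N %/ T) * T + r + N %% T == (j + 1) * T + M %% T)%N.
Proof.
set d := delta (M %% T) r.
have divE n : (n%:R : K) = (n %/ T)%:R * T%:R + (n %% T)%:R.
  by rewrite {1}(divn_eq n T) natrD natrM.
have intE : ((-1 + (M %/ T)%N%:Z + d%:Z)%:~R : K) = (M %/ T)%:R + d%:R - 1.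
  by rewrite !intrD intrN -!pmulrn; ring.
have E : twist_exp r M - mminusn M N - j%:R =
    (((d + N %/ T) * T + r + N %% T)%N%:R - ((j + 1) * T + M %% T)%N%:R) / T%:R.
  rewrite /twist_exp /mminusn intE (divE M) (divE N) !natrD !natrM.
  by field; apply: natT_neq0.
rewrite -subr_eq0 E mulf_eq0 invr_eq0 (negbTE natT_neq0) orbF subr_eq0.
exact: (inj_eq (natf_inj K_char0)).
Qed.

Lemma twist_exp_cond r M N : (r < T)%N ->
  (M %% T + T - N %% T == r %[mod T])%N ->
  twist_exp r M - mminusn M N = (N %/ T)%:R.
Proof.
move=> lt_r /eqP cond; apply/eqP; rewrite twist_exp_sub_natE /delta.
have [E _] := twist_cond_delta (ltn_pmod M T_gt0) (ltn_pmod N T_gt0) lt_r cond.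
by apply/eqP; rewrite mulnDl; lia.
Qed.

Lemma twist_exp_ncond r M N : (r < T)%N ->
  ~~ (M %% T + T - N %% T == r %[mod T])%N ->
  forall j, twist_exp r M - mminusn M N != j%:R.
Proof.
move=> lt_r ncond j; rewrite twist_exp_sub_natE; apply: contra ncond => /eqP E.
exact: (twist_cond_of_eq (ltn_pmod M T_gt0) (ltn_pmod N T_gt0) lt_r E).
Qed.

End Twisted.

Section TwistedProducts.
Variables (K : fieldType) (V : lmodType K) (A : vertex_algebra V).
Variables (T : nat) (om : K) (g : V -> V).
Hypothesis K_char0 : [pchar K] =i pred0.
Hypothesis om_prim : T.-primitive_root om.
Hypothesis g_lin : linear g.
Hypothesis g_vac : g (vvac A) = vvac A.
Hypothesis g_order : forall v : V, iter T g v = v.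

Local Notation vac := (vvac A).
Local Notation proj := (proj T om g).
Local Notation bullet := (bullet A T om g).
Local Notation diamond := (diamond A T om g).
Local Notation twist_exp := (@twist_exp K T).
Local Notation mminusn := (@mminusn K T).

Lemma bullet_h_linear_l r M P N v : linear (fun u => bullet_h A T r M P N u v).
Proof.
move=> a x y; rewrite /bullet_h /=; case: ifP => _; last by rewrite scaler0 addr0.
rewrite scaler_sumr -big_split; apply: eq_bigr => i _ /=.
by rewrite resY_linear_l scalerDr !scalerA mulrC.
Qed.

Lemma bullet_h_linear_r r M P N u : linear (bullet_h A T r M P N u).
Proof.
move=> a x y; rewrite /bullet_h /=; case: ifP => _; last by rewrite scaler0 addr0.
rewrite scaler_sumr -big_split; apply: eq_bigr => i _ /=.
by rewrite resY_linear_r scalerDr !scalerA mulrC.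
Qed.

Lemma bullet_linear_l M P N v : linear (fun u => bullet M P N u v).
Proof.
move=> a x y; rewrite /Defs.bullet scaler_sumr -big_split; apply: eq_bigr => r _ /=.
by rewrite (proj_linear _ _ g_lin) bullet_h_linear_l.
Qed.

Lemma bullet_linear_r M P N u : linear (bullet M P N u).
Proof.
move=> a x y; rewrite /Defs.bullet scaler_sumr -big_split; apply: eq_bigr => r _ /=.
by rewrite bullet_h_linear_r.
Qed.

Lemma bullet_h_vacl M N w : bullet_h A T 0 M N N vac w = w.
Proof.
have T_gt0 := T_gt0 om_prim.
rewrite /bullet_h /= addKn modnn mod0n eqxx.
rewrite (_ : delta (M %% T) 0 = 1)%N // (_ : delta (N %% T) (T - 0) = 0)%N; last first.
  by rewrite /delta subn0 leqNgt ltn_pmod.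
rewrite mul0r addr0 (_ : -1 + (M %/ T)%N%:Z + (1%N)%:Z = (M %/ T)%N%:Z); last lia.
under eq_bigr => i _.
  rewrite [X in resY _ _ X _ _](_ : _ = Posz (M %/ T + i).+1); last lia.
  rewrite addr0 resY_vacl // gbinom_nat // scalerA.
  over.
rewrite big_ord_recl /= big1 => [|i _]; last first.
  by rewrite bin_small ?mulr0 ?scale0r // /bump /= add1n addnS ltnS leq_addr.
by rewrite expr0 gbinom0 // addn0 binn !mul1r addr0 scale1r.
Qed.

Lemma bullet_vacl M N w : bullet M N N vac w = w.
Proof.
have T_gt0 := T_gt0 om_prim.
rewrite /Defs.bullet (bigD1 (Ordinal T_gt0)) //= big1 ?addr0 => [|r ne_r0]; last first.
  rewrite proj_vac // (_ : (r == 0 :> nat) = false) ?scale0r; last first.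
    by apply/eqP => r0; move: ne_r0 => /eqP; apply; apply: val_inj.
  exact: (lin0 (bullet_h_linear_l _ _ _ _ _)).
by rewrite proj_vac // scale1r bullet_h_vacl.
Qed.

Lemma Lspace_O1 M N x : Lspace A (mminusn M N) x -> O1 A T om g N M x.
Proof. by apply: span_mono => _ [u ->]; right; exists u. Qed.

Lemma bullet_h_vacr r M N x : (r < T)%N -> (M %% T + T - N %% T == r %[mod T])%N ->
  Lspace A (mminusn M N) (bullet_h A T r M M N x vac - x).
Proof.
move=> lt_r cond; have T_gt0 := T_gt0 om_prim.
have [_ d12] := twist_cond_delta (ltn_pmod M T_gt0) (ltn_pmod N T_gt0) lt_r (eqP cond).
rewrite /bullet_h /= cond -/(twist_exp r M).
apply: (@span_lincomb_sub _ _ _ _ _ (fun i : 'I_(M %/ T).+1 =>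
    gbinom (twist_exp r M - mminusn M N) (N %/ T + i))) => [i|].
  rewrite [X in resY _ _ X _ _](_ : _ = Posz (N %/ T + i).+1); last by rewrite /delta; lia.
  exact: resY_vac_Lspace.
rewrite (twist_exp_cond K_char0 om_prim) // big_ord_recl /= big1 ?addr0 => [|i _].
  by rewrite expr0 gbinom0 // gbinom_nat // addn0 binn !mul1r.
by rewrite gbinom_nat // bin_small ?mulr0 // /bump /= add1n addnS ltnS leq_addr.
Qed.

Lemma diamond_h_vacr r M N x : (r < T)%N -> ~~ (M %% T + T - N %% T == r %[mod T])%N ->
  exists2 lam : K, lam != 0 & Lspace A (mminusn M N) (diamond_h A T r M N x vac - lam *: x).
Proof.
move=> lt_r ncond; rewrite /diamond_h /= -/(twist_exp r M).
set e := (M %/ T + N %/ T + delta (M %% T) r + delta (N %% T) (T - r))%N.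
exists (gbinom (twist_exp r M - mminusn M N) e).
  by apply: gbinom_neq0 => //; apply: (twist_exp_ncond K_char0 om_prim).
rewrite [X in resY _ _ X _ _](_ : _ = Posz e.+1); last by rewrite /e; lia.
exact: resY_vac_Lspace.
Qed.

Lemma proj_O1 r M N w : (r < T)%N -> ~~ (M %% T + T - N %% T == r %[mod T])%N ->
  O1 A T om g N M (proj r w).
Proof.
move=> lt_r ncond; have [lam lam_neq0 L_lam] := diamond_h_vacr (proj r w) lt_r ncond.
have diamond_proj : diamond M N (proj r w) vac = diamond_h A T r M N (proj r w) vac.
  rewrite /Defs.diamond (bigD1 (Ordinal lt_r)) //= big1 ?addr0 => [|r' ne_r']; last first.
    rewrite proj_proj // (_ : (r' == r :> nat) = false).
      exact: (lin0 (resY_linear_l _ _ _ _)).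
    by apply/eqP => E; move: ne_r' => /eqP; apply; apply: val_inj.
  by rewrite proj_proj // eqxx.
rewrite -[proj r w]scale1r -(mulVf lam_neq0) -scalerA; apply: span_scale.
rewrite (_ : lam *: proj r w = diamond M N (proj r w) vac
                              - (diamond_h A T r M N (proj r w) vac - lam *: proj r w)).
  by apply: span_sub; [apply: span_gen; left; do 2 eexists | apply: Lspace_O1].
by rewrite diamond_proj opprB addrC subrK.
Qed.

Lemma bullet_vacr M N w : Otilde A T om g N M (bullet M M N w vac - w).
Proof.
rewrite -{2}(sum_proj g K_char0 om_prim w) /Defs.bullet -sumrB.
apply: span_sum => r; apply/span_gen; left.
case: (boolP (M %% T + T - N %% T == r %[mod T])%N) => cond.
  exact/Lspace_O1/bullet_h_vacr.
rewrite {1}/bullet_h /= (negbTE cond) sub0r.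
exact/span_opp/proj_O1.
Qed.

End TwistedProducts.

Section Bimodule.
Variables (K : fieldType) (V : lmodType K) (A : vertex_algebra V).
Variables (T : nat) (om : K) (g : V -> V).
Hypothesis K_char0 : [pchar K] =i pred0.
Hypothesis om_prim : T.-primitive_root om.
Hypothesis g_lin : linear g.
Hypothesis g_vac : g (vvac A) = vvac A.
Hypothesis g_order : forall v : V, iter T g v = v.
Variables (N M : nat).

Local Notation vac := (vvac A).
Local Notation B := (bullet A T om g).
Local Notation O := (Otilde A T om g N M).
Local Notation lact := (B M N N).
Local Notation ract := (B M M N).

Lemma O2_mem u a b c p1 p2 p3 :
  O (B M p3 N u (B M p1 p3 (B p1 p2 p3 a b) c - B M p2 p3 a (B M p1 p2 b c))).
Proof. by apply/span_gen; right; left; apply/span_gen; exists a, b, c, u, p1, p2, p3. Qed.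

Lemma O3_mem p1 p2 z y :
  span (fun z' => exists x o, O1 A T om g p2 p1 o /\ z' = B p1 p2 N x o) z ->
  O (B M p1 N z y).
Proof. by move=> Oz; apply/span_gen; right; right; apply/span_gen; exists p1, p2, z, y. Qed.

Lemma O3_mem1 p1 p2 x o y : O1 A T om g p2 p1 o -> O (B M p1 N (B p1 p2 N x o) y).
Proof. by move=> Oo; apply: (@O3_mem p1 p2); apply: span_gen; exists x, o. Qed.

(* The generators of [O''] with [u = 1]. *)
Lemma bullet_assoc a b c q1 q2 :
  O (B M q1 N (B q1 q2 N a b) c - B M q2 N a (B M q1 q2 b c)).
Proof. by have := O2_mem vac a b c q1 q2 N; rewrite bullet_vacl. Qed.

Lemma bullet_assoc_inner u a b c p1 p2 p3 :
  O (B M p3 N u (B M p1 p3 (B p1 p2 p3 a b) c) - B M p3 N u (B M p2 p3 a (B M p1 p2 b c))).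
Proof. by rewrite -(linB (bullet_linear_r _ _ _ _ _ _ _ _)); apply: O2_mem. Qed.

Lemma lact_On_mem u w : On A T om g N u -> O (lact u w).
Proof. by move=> Ou; rewrite -(bullet_vacl K_char0 om_prim g_vac N N u); apply: O3_mem1. Qed.

Lemma ract_On_mem w v : On A T om g M v -> O (ract w v).
Proof.
move=> Ov; apply: span_subr (span_subC (bullet_vacr A K_char0 om_prim g_lin g_order M N _)) _.
exact: O3_mem1.
Qed.

Lemma lact_Otilde_mem u w : O w -> O (lact u w).
Proof.
apply: span_image; first exact: bullet_linear_r.
move=> {}w [Ow|[Ow|Ow]].
- apply: span_subr (span_subC (bullet_vacr A K_char0 om_prim g_lin g_order M N _)) _.
  exact: O3_mem1.
- move: w Ow; apply: span_image; first exact: bullet_linear_r.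
  move=> _ [a [b [c [u' [p1 [p2 [p3 ->]]]]]]].
  apply: span_subr (span_subC (bullet_assoc u u' _ p3 N)) _.
  exact: O2_mem.
- move: w Ow; apply: span_image; first exact: bullet_linear_r.
  move=> _ [p1 [p2 [z [y [Oz ->]]]]].
  (* [u (z y) = (u z) y], and for [z = x o] with [o] in [O'] this is [((u x) o) y]. *)
  apply: span_subr (span_subC (bullet_assoc u z y p1 N)) _.
  move: z Oz; apply: (span_image (f := fun z => B M p1 N (B p1 N N u z) y)).
    exact: linear_comp (bullet_linear_l _ _ _ g_lin _ _ _ _) (bullet_linear_r _ _ _ _ _ _ _ _).
  move=> _ [x [o [Oo ->]]].
  apply: span_subr (bullet_assoc u _ y p1 N) _.
  apply: span_subr (bullet_assoc_inner u x o y p1 p2 N) _.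
  apply: span_subr (span_subC (bullet_assoc u x _ p2 N)) _.
  apply: span_subr (span_subC (bullet_assoc _ o y p1 p2)) _.
  exact: O3_mem1.
Qed.

Lemma ract_Otilde_mem w v : O w -> O (ract w v).
Proof.
apply: (span_image (f := fun w => ract w v)); first exact: bullet_linear_l.
move=> {}w [Ow|[Ow|Ow]].
- by rewrite -(bullet_vacl K_char0 om_prim g_vac M N w); apply: O3_mem1.
- move: w Ow; apply: (span_image (f := fun w => ract w v)); first exact: bullet_linear_l.
  move=> _ [a [b [c [u [p1 [p2 [p3 ->]]]]]]].
  set W := B M p1 p2 b c; set c' := B M M p1 c v.
  apply: span_subr (bullet_assoc u _ v M p3) _.
  rewrite !(linB (bullet_linear_l _ _ _ g_lin _ _ _ _)) (linB (bullet_linear_r _ _ _ _ _ _ _ _)).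
  apply: span_subr (span_subB
      (span_sub_trans (bullet_assoc_inner u _ c v M p1 p3) (bullet_assoc_inner u a b c' p1 p2 p3))
      (bullet_assoc_inner u a W v M p2 p3)) _.
  apply: span_subC; rewrite -!(linB (bullet_linear_r _ _ _ _ _ _ _ _)).
  apply: span_subr (span_subC (bullet_assoc u a _ p2 p3)) _.
  exact: O2_mem.
- move: w Ow; apply: (span_image (f := fun w => ract w v)); first exact: bullet_linear_l.
  move=> _ [p1 [p2 [z [y [Oz ->]]]]].
  apply: span_subr (bullet_assoc z y v M p1) _.
  exact: O3_mem Oz.
Qed.

End Bimodule.

Unset Implicit Arguments.

Theorem theorem3p8 (K : fieldType) (V : lmodType K) (A : vertex_algebra V)
  (T : nat) (om : K) (g : V -> V)
  (HK : [pchar K] =i pred0)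
  (Hom : T.-primitive_root om)
  (Hg_lin : forall (a : K) (x y : V), g (a *: x + y) = a *: g x + g y)
  (Hg_vac : g (vvac A) = vvac A)
  (Hg_hom : forall (u : V) (k : int) (v : V), g (vY A u k v) = vY A (g u) k (g v))
  (Hg_ord : forall v : V, iter T g v = v)
  (N M : nat) :
  let O := Otilde A T om g N M in
  let bl := bullet A T om g M N N in
  let br := bullet A T om g M M N in
  let prodn := bullet A T om g N N N in
  let prodm := bullet A T om g M M M in
  (* well-definedness of the left action *)
  (forall u w, On A T om g N u -> O (bl u w)) /\
  (forall u w, O w -> O (bl u w)) /\
  (* well-definedness of the right action *)
  (forall w v, O w -> O (br w v)) /\
  (forall w v, On A T om g M v -> O (br w v)) /\
  (* left module axioms *)
  (forall u1 u2 w, O (bl (prodn u1 u2) w - bl u1 (bl u2 w))) /\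
  (forall w, O (bl (vvac A) w - w)) /\
  (* right module axioms *)
  (forall w v1 v2, O (br (br w v1) v2 - br w (prodm v1 v2))) /\
  (forall w, O (br w (vvac A) - w)) /\
  (* compatibility of the two actions *)
  (forall u w v, O (br (bl u w) v - bl u (br w v))).
Proof.
move=> O bl br prodn prodm.
split; first exact: lact_On_mem.
split; first exact: lact_Otilde_mem.
split; first exact: ract_Otilde_mem.
split; first exact: ract_On_mem.
split; first by move=> u1 u2 w; apply: bullet_assoc.
split; first by move=> w; rewrite /bl bullet_vacl // subrr; apply: span0.
split; first by move=> w v1 v2; apply: bullet_assoc.
split; first exact: bullet_vacr.
by move=> u w v; apply: bullet_assoc.
Qed.
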